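(* Let $\epsilon>0$, $\delta\ge0$, $\alpha\in(0,1)$, $n\ge 1$, $\theta_0\in(0,1)$, and let $X\sim\mathrm{Binom}(n,\theta)$ with $\theta$ unknown. Set $b=e^{-\epsilon}$, $q=\frac{2\delta b}{1-b+2\delta b}$, $N\sim\mathrm{Tulap}(0,b,q)$, and set $\phi^*_x=F_N(x-m_1)$ and $\psi^*_x=1-F_N(x-m_2)$, where $m_1,m_2\in\mathbb{R}$ are chosen such that $\mathbb{E}_{\theta_0}\phi^*_X=\alpha$ and $\mathbb{E}_{\theta_0}\psi^*_X=\alpha$. Then $\phi^*$ is the uniformly most powerful level-$\alpha$ test among $\mathscr D^n_{\epsilon,\delta}$ for testing $H_0:\theta\le\theta_0$ versus $H_1:\theta>\theta_0$, and $\psi^*$ is the uniformly most powerful level-$\alpha$ test among $\mathscr D^n_{\epsilon,\delta}$ for testing $H_0:\theta\ge\theta_0$ versus $H_1:\theta<\theta_0$.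
   Context: Nearest integer function: for $t\in\mathbb{R}$, $[t]$ is the integer nearest to $t$, where for $z\in\mathbb{Z}$, $[z+1/2]$ is defined to be the nearest even integer. Tulap distribution: for $m\in\mathbb{R}$, $b\in(0,1)$, $q\in[0,1)$, $N_0\sim\mathrm{Tulap}(m,b,0)$ has cdf $F_{N_0}(x)=\frac{b^{-[x-m]}}{1+b}\big(b+(x-m-[x-m]+\tfrac12)(1-b)\big)$ for $x\leq [m]$ and $F_{N_0}(x)=1-\frac{b^{[x-m]}}{1+b}\big(b+([x-m]-(x-m)+\tfrac12)(1-b)\big)$ for $x>[m]$; and $N\sim \mathrm{Tulap}(m,b,q)$ has cdf $F_N(x)=\frac{F_{N_0}(x)-q/2}{1-q}\,I\{q/2\leq F_{N_0}(x)\leq 1-q/2\}+I\{F_{N_0}(x)>1-q/2\}$. A (randomized) test is a function $\phi:\{0,1,\dots,n\}\to[0,1]$, $\phi_x$ being the probability of rejecting $H_0$ when $X=x$. $\mathscr D^n_{\epsilon,\delta}$ is the set of tests $\phi$ such that for all $x\in\{0,\dots,n-1\}$: $\phi_x\le e^\epsilon\phi_{x+1}+\delta$, $\phi_{x+1}\le e^\epsilon\phi_x+\delta$, $1-\phi_x\le e^\epsilon(1-\phi_{x+1})+\delta$, $1-\phi_{x+1}\le e^\epsilon(1-\phi_x)+\delta$. A test $\phi^*\in\Phi$ is uniformly most powerful at level $\alpha$ among $\Phi$ if $\sup_{\theta\in\Theta_0}\mathbb{E}_\theta\phi^*\le\alpha$ and for every $\phi\in\Phi$ with $\sup_{\theta\in\Theta_0}\mathbb{E}_\theta\phi\le\alpha$,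 $\mathbb{E}_\theta\phi^*\ge\mathbb{E}_\theta\phi$ for all $\theta$ in the alternative. *)

From Stdlib Require Import Reals Lra ZArith.
Open Scope R_scope.

Definition nearest_int (t : R) : Z :=
  let f := Int_part t in
  let d := t - IZR f in
  if Rlt_dec d (1/2) then f
  else if Rlt_dec (1/2) d then (f + 1)%Z
  else if Z.even f then f else (f + 1)%Z.

Definition tulap0_cdf (m b x : R) : R :=
  let k := nearest_int (x - m) in
  if Rle_dec x (IZR (nearest_int m)) then
    powerRZ b (- k) / (1 + b) * (b + (x - m - IZR k + 1/2) * (1 - b))
  else
    1 - powerRZ b k / (1 + b) * (b + (IZR k - (x - m) + 1/2) * (1 - b)).

Definition tulap_cdf (m b q x : R) : R :=
  let F0 := tulap0_cdf m b x in
  (if Rle_dec (q/2) F0 then if Rle_dec F0 (1 - q/2) then (F0 - q/2) / (1 - q) else 0 else 0)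
  + (if Rlt_dec (1 - q/2) F0 then 1 else 0).

Definition binom_pmf (n : nat) (theta : R) (x : nat) : R :=
  C n x * theta ^ x * (1 - theta) ^ (n - x).

Definition expect (n : nat) (theta : R) (phi : nat -> R) : R :=
  sum_f_R0 (fun x => phi x * binom_pmf n theta x) n.

Definition is_test (n : nat) (phi : nat -> R) : Prop :=
  forall x, (x <= n)%nat -> 0 <= phi x <= 1.

Definition DP_tests (n : nat) (eps delta : R) (phi : nat -> R) : Prop :=
  is_test n phi /\
  forall x : nat, (x < n)%nat ->
    phi x <= exp eps * phi (S x) + delta /\
    phi (S x) <= exp eps * phi x + delta /\
    1 - phi x <= exp eps * (1 - phi (S x)) + delta /\
    1 - phi (S x) <= exp eps * (1 - phi x) + delta.

Definition level (n : nat) (Theta0 : R -> Prop) (alpha : R) (phi : nat -> R) : Prop :=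
  forall theta, Theta0 theta -> expect n theta phi <= alpha.

Definition UMP (n : nat) (Phi : (nat -> R) -> Prop) (Theta0 Theta1 : R -> Prop)
  (alpha : R) (phi : nat -> R) : Prop :=
  Phi phi /\ level n Theta0 alpha phi /\
  forall psi, Phi psi -> level n Theta0 alpha psi ->
    forall theta, Theta1 theta -> expect n theta phi >= expect n theta psi.

(* For [q = 0] the Tulap cdf satisfies [F0 (t + 1) = min (F0 t / b, 1 - b (1 - F0 t))], and
   rescaling by [q] turns this into [F (t + 1) = min (1, e^eps F t + delta, 1 - b (1 - F t - delta))]
   whenever [F t > 0]: the Tulap test phi* makes the (eps, delta)-DP constraint between consecutive
   values tight.  Hence a DP test chi that drops below phi* at some x stays below it afterwards, so
   phi* - chi changes sign at most once, from - to +.  As the binomial family has monotone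
   likelihood ratio in x, the Neyman-Pearson weighting by that ratio (Karlin-Rubin) shows that
   phi* beats every such chi of no larger size, and, applied to the constant test alpha, that phi*
   has level alpha.  psi* is handled by applying the same argument to 1 - chi. *)

From Stdlib Require Import Reals Lra Lia Psatz ZArith.
Open Scope R_scope.

Definition near_int (t : R) (j : Z) : Prop := - (1/2) <= t - IZR j <= 1/2.

Lemma nearest_int_near t : near_int t (nearest_int t).
Proof.
  unfold near_int, nearest_int; cbv zeta.
  destruct (base_Int_part t) as [Hlo Hhi].
  destruct (Rlt_dec (t - IZR (Int_part t)) (1/2)); [lra|].
  destruct (Rlt_dec (1/2) (t - IZR (Int_part t))).
  - rewrite plus_IZR; simpl; lra.
  - destruct (Z.even (Int_part t)); [|rewrite plus_IZR]; simpl; lra.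
Qed.

Lemma near_int_succ t j : near_int t j -> near_int (t + 1) (j + 1).
Proof. unfold near_int; rewrite plus_IZR; simpl; lra. Qed.

Lemma near_int_opp t j : near_int t j -> near_int (- t) (- j).
Proof. unfold near_int; rewrite opp_IZR; lra. Qed.

Lemma near_int_cases t j j' : near_int t j -> near_int t j' ->
  j' = j \/ (j' = (j + 1)%Z /\ t = IZR j + 1/2) \/ (j = (j' + 1)%Z /\ t = IZR j' + 1/2).
Proof.
  unfold near_int; intros Hj Hj'.
  assert (Hle : (j' - j <= 1)%Z) by (apply le_IZR; rewrite minus_IZR; lra).
  assert (Hge : (-1 <= j' - j)%Z) by (apply le_IZR; rewrite minus_IZR; simpl; lra).
  assert (j' = j \/ j' = j + 1 \/ j = j' + 1)%Z as [-> | [-> | ->]] by lia;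
    rewrite ?plus_IZR in *; simpl in *; [left | right; left | right; right]; split; auto; lra.
Qed.

Lemma nearest_int_0 : nearest_int 0 = 0%Z.
Proof.
  destruct (nearest_int_near 0) as [Hlo Hhi].
  assert (Hlt : (nearest_int 0 < 1)%Z) by (apply lt_IZR; simpl; lra).
  assert (Hgt : (-1 < nearest_int 0)%Z) by (apply lt_IZR; simpl; lra).
  lia.
Qed.

Section Tulap0.
Variable b : R.
Hypothesis b_bounds : 0 < b < 1.

Definition tulap_piece (t : R) (j : Z) : R :=
  powerRZ b (- j) / (1 + b) * (b + (t - IZR j + 1/2) * (1 - b)).

Lemma tulap_piece_succ t j : tulap_piece (t + 1) (j + 1) = tulap_piece t j / b.
Proof.
  unfold tulap_piece; rewrite Z.opp_add_distr, powerRZ_add, plus_IZR by lra.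
  simpl; field; lra.
Qed.

(* The pieces agree at half-integers, so the tie-breaking rule of [nearest_int] is irrelevant. *)
Lemma tulap_piece_near t j j' :
  near_int t j -> near_int t j' -> tulap_piece t j = tulap_piece t j'.
Proof.
  intros Hj Hj'.
  destruct (near_int_cases t j j' Hj Hj') as [-> | [[-> ->] | [-> ->]]]; [reflexivity| |];
    unfold tulap_piece; rewrite Z.opp_add_distr, powerRZ_add, plus_IZR by lra;
    simpl; field; lra.
Qed.

Lemma tulap_piece_sym0 t : tulap_piece t 0 = 1 - tulap_piece (- t) 0.
Proof. unfold tulap_piece; simpl; field; lra. Qed.

Lemma tulap0_cdf_pieces t : tulap0_cdf 0 b t =
  if Rle_dec t 0 then tulap_piece t (nearest_int t)
  else 1 - tulap_piece (- t) (- nearest_int t).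
Proof.
  unfold tulap0_cdf, tulap_piece; cbv zeta.
  rewrite nearest_int_0, Rminus_0_r, Z.opp_involutive, opp_IZR.
  destruct (Rle_dec t (IZR 0)); [reflexivity|].
  do 3 f_equal; ring.
Qed.

Lemma tulap0_cdf_left t j : t <= 1/2 -> near_int t j -> tulap0_cdf 0 b t = tulap_piece t j.
Proof.
  intros Ht Hj; rewrite tulap0_cdf_pieces.
  destruct (Rle_dec t 0).
  - apply tulap_piece_near; auto using nearest_int_near.
  - assert (H0 : near_int t 0) by (unfold near_int; simpl; lra).
    rewrite (tulap_piece_near (- t) _ 0 (near_int_opp _ _ (nearest_int_near t)))
      by (apply near_int_opp in H0; exact H0).
    rewrite <- tulap_piece_sym0; apply tulap_piece_near; auto.
Qed.

Lemma tulap0_cdf_right t j : - (1/2) <= t -> near_int t j ->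
  tulap0_cdf 0 b t = 1 - tulap_piece (- t) (- j).
Proof.
  intros Ht Hj; rewrite tulap0_cdf_pieces.
  destruct (Rle_dec t 0).
  - assert (H0 : near_int t 0) by (unfold near_int; simpl; lra).
    rewrite (tulap_piece_near t _ 0 (nearest_int_near t) H0), tulap_piece_sym0.
    f_equal; apply tulap_piece_near; [apply near_int_opp in H0; exact H0|].
    now apply near_int_opp.
  - f_equal; apply tulap_piece_near; apply near_int_opp; auto using nearest_int_near.
Qed.

Lemma tulap_piece_bounds t j : t <= - (1/2) -> near_int t j ->
  0 <= tulap_piece t j <= b / (1 + b).
Proof.
  unfold near_int; intros Ht Hj.
  assert (Hj0 : (j <= 0)%Z) by (apply le_IZR; simpl; lra).
  destruct (Z.eq_dec j 0) as [-> | Hne].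
  - replace t with (- (1/2)) by (simpl in Hj; lra).
    replace (tulap_piece (- (1/2)) 0) with (b / (1 + b)) by (unfold tulap_piece; simpl; field; lra).
    split; [apply Rlt_le, Rdiv_pos_pos|]; lra.
  - assert (Hpow : 0 <= powerRZ b (- j) <= b).
    { rewrite <- (Z2Nat.id (- j)), <- pow_powerRZ by lia.
      destruct (Z.to_nat (- j)) as [|k] eqn:Hk; [lia|].
      pose proof (pow_incr b 1 k ltac:(lra)); pose proof (pow_le b k ltac:(lra)).
      rewrite pow1 in *; simpl; nra. }
    assert (Hfac : b <= b + (t - IZR j + 1/2) * (1 - b) <= 1) by nra.
    assert (Hinv : 0 < / (1 + b)) by (apply Rinv_0_lt_compat; lra).
    unfold tulap_piece.
    set (p := powerRZ b (- j)) in *; set (f := b + (t - IZR j + 1/2) * (1 - b)) in *.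
    assert (Hpf : 0 <= p * f <= b) by nra.
    replace (p / (1 + b) * f) with (p * f * / (1 + b)) by (field; lra).
    unfold Rdiv; split; [apply Rmult_le_pos | apply Rmult_le_compat_r]; lra.
Qed.

Lemma tulap0_cdf_succ_cases t :
  (tulap0_cdf 0 b (t + 1) = tulap0_cdf 0 b t / b /\ 0 <= tulap0_cdf 0 b t <= b / (1 + b)) \/
  (1 - tulap0_cdf 0 b (t + 1) = b * (1 - tulap0_cdf 0 b t) /\ b / (1 + b) <= tulap0_cdf 0 b t <= 1).
Proof.
  set (j := nearest_int t); assert (Hj : near_int t j) by apply nearest_int_near.
  destruct (Rle_dec t (- (1/2))) as [Ht|Ht]; [left|right].
  - rewrite (tulap0_cdf_left t j), (tulap0_cdf_left (t + 1) (j + 1)) by (auto using near_int_succ; lra).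
    split; [apply tulap_piece_succ | now apply tulap_piece_bounds].
  - set (j' := (- (j + 1))%Z).
    assert (Hj' : near_int (- (t + 1)) j') by (apply near_int_opp, near_int_succ, Hj).
    assert (Hsucc : tulap_piece (- t) (- j) = tulap_piece (- (t + 1)) j' / b).
    { rewrite <- tulap_piece_succ; f_equal; [ring | unfold j'; lia]. }
    rewrite (tulap0_cdf_right t j), (tulap0_cdf_right (t + 1) (j + 1)), Hsucc by (auto using near_int_succ; lra).
    fold j'; destruct (tulap_piece_bounds (- (t + 1)) j') as [Hlo Hhi]; [lra | auto |].
    set (y := tulap_piece (- (t + 1)) j') in *.
    assert (Hy : y = b * (y / b)) by (field; lra).
    assert (Hmid : b / (1 + b) * (1 + b) = b) by (field; lra).
    split; [field; lra | split; nra].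
Qed.

Lemma tulap0_cdf_succ t :
  tulap0_cdf 0 b t <= tulap0_cdf 0 b (t + 1) /\
  tulap0_cdf 0 b (t + 1) = Rmin (tulap0_cdf 0 b t / b) (1 - b * (1 - tulap0_cdf 0 b t)).
Proof.
  set (x := tulap0_cdf 0 b t); set (y := tulap0_cdf 0 b (t + 1)).
  assert (Hx : x = b * (x / b)) by (field; lra).
  assert (Hmid : b / (1 + b) * (1 + b) = b) by (field; lra).
  destruct (tulap0_cdf_succ_cases t) as [[Hy [Hlo Hhi]] | [Hy [Hlo Hhi]]];
    fold x y in Hy, Hlo, Hhi.
  - apply (Rmult_le_compat_r (1 + b)) in Hhi; [|lra]; rewrite Hmid in Hhi.
    rewrite Hy, Rmin_left; nra.
  - apply (Rmult_le_compat_r (1 + b)) in Hlo; [|lra]; rewrite Hmid in Hlo.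
    rewrite Rmin_right; nra.
Qed.
End Tulap0.

Definition clip (g : R) : R := Rmax 0 (Rmin 1 g).

Lemma clip_bounds g : 0 <= clip g <= 1.
Proof. unfold clip, Rmax, Rmin; repeat destruct Rle_dec; lra. Qed.

Lemma clip_le_compat g h : g <= h -> clip g <= clip h.
Proof. intro H; apply Rle_max_compat_l, Rle_min_compat_l, H. Qed.

Lemma clip_id g : 0 <= g <= 1 -> clip g = g.
Proof. unfold clip, Rmax, Rmin; repeat destruct Rle_dec; lra. Qed.

Lemma clip_pos_le g : 0 < clip g -> clip g <= g.
Proof. unfold clip, Rmax, Rmin; repeat destruct Rle_dec; lra. Qed.

Lemma clip_le_self y : 0 <= y -> clip y <= y.
Proof. unfold clip, Rmax, Rmin; repeat destruct Rle_dec; lra. Qed.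

Lemma clip_le_monotone (f : R -> R) g :
  (forall u v, u <= v -> f u <= f v) -> 0 <= f 0 -> 1 <= f 1 -> clip (f g) <= f (clip g).
Proof.
  intros Hf H0 H1.
  destruct (Rle_dec g 0) as [Hg0|Hg0]; [|destruct (Rle_dec 1 g) as [Hg1|Hg1]].
  - replace (clip g) with 0 by (unfold clip, Rmax, Rmin; repeat destruct Rle_dec; lra).
    apply (Rle_trans _ (clip (f 0))); [apply clip_le_compat, Hf, Hg0 | apply clip_le_self, H0].
  - replace (clip g) with 1 by (unfold clip, Rmax, Rmin; repeat destruct Rle_dec; lra).
    pose proof (clip_bounds (f g)); lra.
  - rewrite (clip_id g) by lra; apply clip_le_self.
    pose proof (Hf 0 g ltac:(lra)); lra.
Qed.

Lemma Rmin_monotone_map (f : R -> R) y z :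
  (forall u v, u <= v -> f u <= f v) -> f (Rmin y z) = Rmin (f y) (f z).
Proof.
  intro Hf; unfold Rmin.
  destruct (Rle_dec y z) as [H|H]; destruct (Rle_dec (f y) (f z)) as [H'|H']; auto.
  - contradiction (H' (Hf _ _ H)).
  - apply Rle_antisym; [apply Hf; lra | exact H'].
Qed.

Lemma tulap_cdf_clip m b q t : 0 <= q < 1 ->
  tulap_cdf m b q t = clip ((tulap0_cdf m b t - q / 2) / (1 - q)).
Proof.
  intro Hq; unfold tulap_cdf; cbv zeta.
  set (g := (tulap0_cdf m b t - q / 2) / (1 - q)).
  replace (tulap0_cdf m b t) with (q / 2 + (1 - q) * g) by (unfold g; field; lra).
  unfold clip, Rmax, Rmin; repeat destruct Rle_dec; repeat destruct Rlt_dec; try nra; field; lra.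
Qed.

Definition dp_step (eps delta u v : R) : Prop :=
  u <= exp eps * v + delta /\ v <= exp eps * u + delta /\
  1 - u <= exp eps * (1 - v) + delta /\ 1 - v <= exp eps * (1 - u) + delta.

Definition dp_bound (eps delta u : R) : R :=
  Rmin (exp eps * u + delta) (1 - exp (- eps) * (1 - u - delta)).

Definition dp_next (eps delta u : R) : R := clip (dp_bound eps delta u).

Section DifferentialPrivacy.
Variables eps delta : R.
Hypothesis eps_pos : 0 < eps.
Hypothesis delta_ge0 : 0 <= delta.

Local Notation c := (exp eps).
Local Notation b := (exp (- eps)).

Lemma exp_opp_mul : b * c = 1.
Proof. rewrite exp_Ropp; field; apply Rgt_not_eq, exp_pos. Qed.

Lemma exp_gt1 : 1 < c.
Proof. rewrite <- exp_0; apply exp_increasing, eps_pos. Qed.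

Lemma exp_opp_bounds : 0 < b < 1.
Proof. pose proof exp_opp_mul; pose proof exp_gt1; split; [apply exp_pos | nra]. Qed.

Lemma dp_bound_le_compat u v : u <= v -> dp_bound eps delta u <= dp_bound eps delta v.
Proof.
  intro H; pose proof exp_opp_bounds; pose proof exp_gt1; unfold dp_bound.
  apply Rle_trans with (Rmin (c * v + delta) (1 - b * (1 - u - delta)));
    [apply Rle_min_compat_r | apply Rle_min_compat_l]; nra.
Qed.

Lemma dp_step_of_le_bound u v :
  0 <= u <= v -> v <= 1 -> v <= dp_bound eps delta u -> dp_step eps delta u v.
Proof.
  unfold dp_bound; intros Huv Hv1 Hv.
  pose proof (Rle_trans _ _ _ Hv (Rmin_l _ _)); pose proof (Rle_trans _ _ _ Hv (Rmin_r _ _)).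
  pose proof exp_opp_mul; pose proof exp_gt1; unfold dp_step; repeat split; nra.
Qed.

Lemma dp_step_le_next u v : 0 <= v <= 1 -> dp_step eps delta u v -> v <= dp_next eps delta u.
Proof.
  intros Hv [_ [H1 [H2 _]]]; unfold dp_next.
  rewrite <- (clip_id v Hv); apply clip_le_compat; unfold dp_bound.
  pose proof exp_opp_mul; pose proof exp_opp_bounds.
  apply Rmin_glb; [exact H1 | nra].
Qed.

Lemma dp_step_clip g :
  g <= dp_bound eps delta g -> dp_step eps delta (clip g) (dp_next eps delta g).
Proof.
  intro Hg; pose proof exp_opp_bounds; pose proof exp_gt1.
  pose proof (clip_bounds g); pose proof (clip_bounds (dp_bound eps delta g)).
  apply dp_step_of_le_bound; unfold dp_next; try lra.
  - split; [lra | apply clip_le_compat, Hg].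
  - apply clip_le_monotone; [exact dp_bound_le_compat | |]; unfold dp_bound;
      apply Rmin_glb; nra.
Qed.

Lemma dp_next_clip_le g : 0 < clip g -> dp_next eps delta (clip g) <= dp_next eps delta g.
Proof. intro Hg; apply clip_le_compat, dp_bound_le_compat, clip_pos_le, Hg. Qed.

Lemma DP_tests_const n a : 0 <= a <= 1 -> DP_tests n eps delta (fun _ => a).
Proof.
  intro Ha; pose proof exp_gt1; split; [intros x _; exact Ha|].
  intros x _; repeat split; nra.
Qed.

End DifferentialPrivacy.

Lemma DP_tests_compl n eps delta chi :
  DP_tests n eps delta chi -> DP_tests n eps delta (fun x => 1 - chi x).
Proof.
  intros [Htest Hstep]; split.
  - intros x Hx; specialize (Htest x Hx); lra.
  - intros x Hx.
    replace (1 - (1 - chi x)) with (chi x) by ring.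
    replace (1 - (1 - chi (S x))) with (chi (S x)) by ring.
    destruct (Hstep x Hx); tauto.
Qed.

Definition crosses (n : nat) (f g : nat -> R) (k : nat) : Prop :=
  forall x, (x <= n)%nat -> ((x < k)%nat -> f x <= g x) /\ ((k < x)%nat -> g x <= f x).

Lemma crosses_compl n f g k :
  crosses n f (fun x => 1 - g x) k -> crosses n g (fun x => 1 - f x) k.
Proof.
  intros Hfg x Hx; destruct (Hfg x Hx) as [Hbefore Hafter].
  split; intro Hxk; [specialize (Hbefore Hxk) | specialize (Hafter Hxk)]; lra.
Qed.

Lemma first_crossing (phi chi : nat -> R) N :
  (forall x, (x <= N)%nat -> phi x <= chi x) \/
  exists k, (k <= N)%nat /\ (forall x, (x < k)%nat -> phi x <= chi x) /\ chi k < phi k.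
Proof.
  induction N as [|N [Hall | [k [Hk Hbefore]]]].
  - destruct (Rle_dec (phi 0%nat) (chi 0%nat)) as [H|H].
    + left; intros x Hx; replace x with 0%nat by lia; exact H.
    + right; exists 0%nat; repeat split; [lia | intros; lia | lra].
  - destruct (Rle_dec (phi (S N)) (chi (S N))) as [H|H].
    + left; intros x Hx; destruct (Nat.eq_dec x (S N)) as [->|]; [exact H | apply Hall; lia].
    + right; exists (S N); repeat split; [lia | intros x Hx; apply Hall; lia | lra].
  - right; exists k; split; [lia | exact Hbefore].
Qed.

Section SingleCrossing.
Variable next : R -> R.
Hypothesis next_le_compat : forall u v, u <= v -> next u <= next v.
Variables (n : nat) (phi chi : nat -> R).
Hypothesis phi_le_succ : forall x, (x < n)%nat -> phi x <= phi (S x).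
Hypothesis phi_succ_ge : forall x, (x < n)%nat -> 0 < phi x -> next (phi x) <= phi (S x).
Hypothesis chi_succ_le : forall x, (x < n)%nat -> chi (S x) <= next (chi x).
Hypothesis chi_ge0 : forall x, (x <= n)%nat -> 0 <= chi x.

Lemma crossing_propagates k :
  chi k < phi k -> forall x, (k <= x <= n)%nat -> chi x <= phi x /\ 0 < phi x.
Proof.
  intros Hk x [Hkx Hxn]; induction Hkx as [|x Hkx IH].
  - pose proof (chi_ge0 k Hxn); lra.
  - destruct (IH ltac:(lia)) as [Hle Hpos]; split.
    + apply (Rle_trans _ _ _ (chi_succ_le x ltac:(lia))), (Rle_trans _ (next (phi x))).
      * now apply next_le_compat.
      * apply phi_succ_ge; [lia | exact Hpos].
    + pose proof (phi_le_succ x ltac:(lia)); lra.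
Qed.

Lemma single_crossing : exists k, (k <= n)%nat /\ crosses n phi chi k.
Proof.
  destruct (first_crossing phi chi n) as [Hall | [k [Hkn [Hbefore Hk]]]].
  - exists n; split; [lia|]; intros x Hx; split; [intros; apply Hall, Hx | intros; lia].
  - exists k; split; [exact Hkn|]; intros x Hx; split; [apply Hbefore|].
    intro Hkx; apply (crossing_propagates k Hk); lia.
Qed.

End SingleCrossing.

Definition tulap_q (eps delta : R) : R :=
  2 * delta * exp (- eps) / (1 - exp (- eps) + 2 * delta * exp (- eps)).

Definition tulap_test (eps delta m : R) (x : nat) : R :=
  tulap_cdf 0 (exp (- eps)) (tulap_q eps delta) (INR x - m).

Section TulapTest.
Variables eps delta : R.
Hypothesis eps_pos : 0 < eps.
Hypothesis delta_ge0 : 0 <= delta.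

Local Notation c := (exp eps).
Local Notation b := (exp (- eps)).
Local Notation q := (tulap_q eps delta).

Lemma tulap_q_bounds : 0 <= q < 1.
Proof.
  pose proof (exp_opp_bounds eps eps_pos) as Hb; unfold tulap_q.
  assert (Hden : 0 < 1 - b + 2 * delta * b) by nra.
  split.
  - apply Rmult_le_pos; [nra | apply Rlt_le, Rinv_0_lt_compat, Hden].
  - apply (Rmult_lt_reg_r (1 - b + 2 * delta * b)); [exact Hden|].
    unfold Rdiv; rewrite Rmult_assoc, Rinv_l by lra; lra.
Qed.

Lemma tulap_q_delta : delta * (1 - q) = (c - 1) * (q / 2).
Proof.
  pose proof (exp_opp_bounds eps eps_pos) as Hb; pose proof (exp_opp_mul eps) as Hbc.
  unfold tulap_q; replace c with (/ b) by (apply Rmult_eq_reg_l with b; [rewrite Rinv_r|]; lra).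
  field; split; nra.
Qed.

Lemma tulap_affine_le_compat u v : u <= v -> (u - q / 2) / (1 - q) <= (v - q / 2) / (1 - q).
Proof.
  intro Huv; pose proof tulap_q_bounds.
  apply Rmult_le_compat_r; [apply Rlt_le, Rinv_0_lt_compat|]; lra.
Qed.

(* This identity is what dictates the value of [q]. *)
Lemma tulap_affine_dp_bound x :
  (Rmin (x / b) (1 - b * (1 - x)) - q / 2) / (1 - q) = dp_bound eps delta ((x - q / 2) / (1 - q)).
Proof.
  rewrite (Rmin_monotone_map (fun y => (y - q / 2) / (1 - q))) by exact tulap_affine_le_compat.
  pose proof tulap_q_bounds; pose proof tulap_q_delta as Hqd; pose proof (exp_pos eps).
  unfold dp_bound; rewrite exp_Ropp.
  set (r := q) in *; clearbody r.
  assert (Hd : delta = (c - 1) * (r / 2) / (1 - r)) by (rewrite <- Hqd; field; lra).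
  rewrite Hd; f_equal; field; lra.
Qed.

Lemma tulap_cdf_succ t :
  let g := (tulap0_cdf 0 b t - q / 2) / (1 - q) in
  tulap_cdf 0 b q t = clip g /\ tulap_cdf 0 b q (t + 1) = dp_next eps delta g /\
  g <= dp_bound eps delta g.
Proof.
  intro g; pose proof tulap_q_bounds.
  destruct (tulap0_cdf_succ b (exp_opp_bounds eps eps_pos) t) as [Hle Heq].
  rewrite !tulap_cdf_clip, Heq, tulap_affine_dp_bound by exact tulap_q_bounds.
  repeat split; unfold g; rewrite <- tulap_affine_dp_bound, <- Heq.
  apply tulap_affine_le_compat, Hle.
Qed.

Lemma tulap_test_succ m x : exists g,
  tulap_test eps delta m x = clip g /\ tulap_test eps delta m (S x) = dp_next eps delta g /\
  g <= dp_bound eps delta g.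
Proof.
  unfold tulap_test; rewrite S_INR; replace (INR x + 1 - m) with (INR x - m + 1) by ring.
  eexists; apply tulap_cdf_succ.
Qed.

Lemma tulap_test_DP n m : DP_tests n eps delta (tulap_test eps delta m).
Proof.
  split.
  - intros x _; destruct (tulap_test_succ m x) as [g [-> _]]; apply clip_bounds.
  - intros x _; destruct (tulap_test_succ m x) as [g [-> [-> Hg]]].
    now apply dp_step_clip.
Qed.

Lemma tulap_test_le_succ m x : tulap_test eps delta m x <= tulap_test eps delta m (S x).
Proof.
  destruct (tulap_test_succ m x) as [g [-> [-> Hg]]].
  apply clip_le_compat, Hg.
Qed.

Lemma tulap_test_succ_ge m x : 0 < tulap_test eps delta m x ->
  dp_next eps delta (tulap_test eps delta m x) <= tulap_test eps delta m (S x).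
Proof.
  destruct (tulap_test_succ m x) as [g [-> [-> _]]].
  now apply dp_next_clip_le.
Qed.

Lemma tulap_test_crosses n m chi : DP_tests n eps delta chi ->
  exists k, (k <= n)%nat /\ crosses n (tulap_test eps delta m) chi k.
Proof.
  intros [Htest Hstep]; apply (single_crossing (dp_next eps delta)).
  - intros u v Huv; now apply clip_le_compat, dp_bound_le_compat.
  - intros x _; apply tulap_test_le_succ.
  - intros x _; apply tulap_test_succ_ge.
  - intros x Hx; apply dp_step_le_next, Hstep; auto; apply Htest; lia.
  - intros x Hx; apply Htest, Hx.
Qed.

End TulapTest.

Lemma binom_pmf_ge0 n theta x : 0 <= theta <= 1 -> 0 <= binom_pmf n theta x.
Proof.
  intro Hth; unfold binom_pmf, C.
  repeat apply Rmult_le_pos; try apply pow_le; try lra.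
  - apply pos_INR.
  - apply Rlt_le, Rinv_0_lt_compat, Rmult_lt_0_compat; apply INR_fact_lt_0.
Qed.

Lemma le_upto_of_le_succ (u : nat -> R) n : (forall x, (x < n)%nat -> u x <= u (S x)) ->
  forall x y, (x <= y)%nat -> (y <= n)%nat -> u x <= u y.
Proof.
  intros Hu x y Hxy Hy; induction Hxy as [|y Hxy IH]; [lra|].
  apply (Rle_trans _ _ _ (IH ltac:(lia))), Hu; lia.
Qed.

Definition lr (n : nat) (theta theta0 : R) (x : nat) : R :=
  (theta / theta0) ^ x * ((1 - theta) / (1 - theta0)) ^ (n - x).

Section LikelihoodRatio.
Variables (n : nat) (theta theta0 : R).
Hypothesis theta_bounds : 0 <= theta <= 1.
Hypothesis theta0_bounds : 0 < theta0 < 1.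

Lemma binom_pmf_lr x : binom_pmf n theta x = lr n theta theta0 x * binom_pmf n theta0 x.
Proof.
  unfold binom_pmf, lr.
  replace theta with (theta / theta0 * theta0) at 1 by (field; lra).
  replace (1 - theta) with ((1 - theta) / (1 - theta0) * (1 - theta0)) at 1 by (field; lra).
  rewrite !Rpow_mult_distr; ring.
Qed.

Lemma lr_ge0 x : 0 <= lr n theta theta0 x.
Proof.
  unfold lr; apply Rmult_le_pos; apply pow_le; unfold Rdiv;
    apply Rmult_le_pos; try apply Rlt_le, Rinv_0_lt_compat; lra.
Qed.

Lemma lr_succ_sub x : (x < n)%nat -> exists w, 0 <= w /\
  lr n theta theta0 (S x) - lr n theta theta0 x = w * (theta - theta0).
Proof.
  intro Hx; unfold lr; replace (n - x)%nat with (S (n - S x)) by lia.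
  set (a := theta / theta0); set (be := (1 - theta) / (1 - theta0)).
  exists (a ^ x * be ^ (n - S x) / (theta0 * (1 - theta0))); split.
  - assert (0 <= a /\ 0 <= be) as [Ha Hbe] by (unfold a, be, Rdiv; split;
      apply Rmult_le_pos; try apply Rlt_le, Rinv_0_lt_compat; lra).
    unfold Rdiv; apply Rmult_le_pos; [apply Rmult_le_pos; apply pow_le; lra|].
    apply Rlt_le, Rinv_0_lt_compat, Rmult_lt_0_compat; lra.
  - unfold a, be; simpl; field; lra.
Qed.

Lemma lr_le_compat : theta0 <= theta ->
  forall x y, (x <= y)%nat -> (y <= n)%nat -> lr n theta theta0 x <= lr n theta theta0 y.
Proof.
  intro Hth; apply le_upto_of_le_succ; intros x Hx.
  destruct (lr_succ_sub x Hx) as [w [Hw Hsub]]; nra.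
Qed.

Lemma lr_ge_compat : theta <= theta0 ->
  forall x y, (x <= y)%nat -> (y <= n)%nat -> lr n theta theta0 y <= lr n theta theta0 x.
Proof.
  intros Hth x y Hxy Hy.
  enough (- lr n theta theta0 x <= - lr n theta theta0 y) by lra.
  revert x y Hxy Hy; apply (le_upto_of_le_succ (fun x => - lr n theta theta0 x)); intros x Hx.
  destruct (lr_succ_sub x Hx) as [w [Hw Hsub]]; nra.
Qed.

End LikelihoodRatio.

Lemma expect_const n theta a : expect n theta (fun _ => a) = a.
Proof.
  transitivity (a * (theta + (1 - theta)) ^ n).
  - rewrite binomial, scal_sum; apply sum_eq; intros; unfold binom_pmf; ring.
  - replace (theta + (1 - theta)) with 1 by ring; rewrite pow1; ring.
Qed.

Lemma crosses_mul_ge0 n f g k (r : nat -> R) : (k <= n)%nat -> crosses n f g k ->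
  (forall x y, (x <= y)%nat -> (y <= n)%nat -> r x <= r y) ->
  forall x, (x <= n)%nat -> 0 <= (f x - g x) * (r x - r k).
Proof.
  intros Hk Hfg Hr x Hx; destruct (Hfg x Hx) as [Hbefore Hafter].
  destruct (Nat.lt_total x k) as [Hxk | [-> | Hkx]].
  - specialize (Hbefore Hxk); pose proof (Hr x k ltac:(lia) Hk); nra.
  - nra.
  - specialize (Hafter Hkx); pose proof (Hr k x ltac:(lia) Hx); nra.
Qed.

Lemma expect_sub n theta f g :
  expect n theta f - expect n theta g = expect n theta (fun x => f x - g x).
Proof. unfold expect; rewrite <- minus_sum; apply sum_eq; intros; ring. Qed.

(* Neyman-Pearson: against the likelihood ratio to [theta0], every term of
   [expect n theta h - lr k * expect n theta0 h] has the sign of [h x * (lr x - lr k)]. *)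
Lemma expect_ge_lr n theta theta0 k h : 0 <= theta <= 1 -> 0 < theta0 < 1 ->
  (forall x, (x <= n)%nat -> 0 <= h x * (lr n theta theta0 x - lr n theta theta0 k)) ->
  lr n theta theta0 k * expect n theta0 h <= expect n theta h.
Proof.
  intros Hth Hth0 Hsign; unfold expect.
  set (w x := h x * (lr n theta theta0 x - lr n theta theta0 k) * binom_pmf n theta0 x).
  assert (Hdiff : sum_f_R0 (fun x => h x * binom_pmf n theta x) n
      - lr n theta theta0 k * sum_f_R0 (fun x => h x * binom_pmf n theta0 x) n = sum_f_R0 w n).
  { rewrite scal_sum, <- minus_sum; apply sum_eq; intros x _.
    unfold w; rewrite (binom_pmf_lr n theta theta0) by exact Hth0; ring. }
  assert (Hw : 0 <= sum_f_R0 w n).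
  { rewrite <- (Rmult_0_l (INR (S n))), <- sum_cte; apply sum_Rle; intros x Hx.
    apply Rmult_le_pos; [apply Hsign, Hx | apply binom_pmf_ge0; lra]. }
  lra.
Qed.

Lemma expect_le_of_crosses_up n theta theta0 f g k :
  0 < theta0 < 1 -> theta0 <= theta <= 1 -> (k <= n)%nat -> crosses n f g k ->
  expect n theta0 g <= expect n theta0 f -> expect n theta g <= expect n theta f.
Proof.
  intros Hth0 Hth Hk Hfg Hsize.
  pose proof (lr_ge0 n theta theta0 ltac:(lra) Hth0 k).
  assert (Hsign := crosses_mul_ge0 n f g k _ Hk Hfg
    (lr_le_compat n theta theta0 ltac:(lra) Hth0 ltac:(lra))).
  pose proof (expect_ge_lr n theta theta0 k _ ltac:(lra) Hth0 Hsign).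
  rewrite <- !expect_sub in *; nra.
Qed.

Lemma expect_le_of_crosses_down n theta theta0 f g k :
  0 < theta0 < 1 -> 0 <= theta <= theta0 -> (k <= n)%nat -> crosses n f g k ->
  expect n theta0 f <= expect n theta0 g -> expect n theta f <= expect n theta g.
Proof.
  intros Hth0 Hth Hk Hfg Hsize.
  pose proof (lr_ge0 n theta theta0 ltac:(lra) Hth0 k).
  assert (Hsign := crosses_mul_ge0 n f g k (fun x => - lr n theta theta0 x) Hk Hfg
    (fun x y Hxy Hy => Ropp_le_contravar _ _
       (lr_ge_compat n theta theta0 ltac:(lra) Hth0 ltac:(lra) x y Hxy Hy))).
  assert (Hsign' : forall x, (x <= n)%nat ->
      0 <= (g x - f x) * (lr n theta theta0 x - lr n theta theta0 k))
    by (intros x Hx; specialize (Hsign x Hx); simpl in Hsign; lra).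
  pose proof (expect_ge_lr n theta theta0 k _ ltac:(lra) Hth0 Hsign').
  rewrite <- !expect_sub in *; nra.
Qed.

Section KarlinRubin.
Variables (n : nat) (Phi : (nat -> R) -> Prop) (theta0 alpha : R).
Hypothesis theta0_bounds : 0 < theta0 < 1.
Hypothesis Phi_const : Phi (fun _ => alpha).

Lemma UMP_of_crosses_right phi : Phi phi -> expect n theta0 phi = alpha ->
  (forall chi, Phi chi -> exists k, (k <= n)%nat /\ crosses n phi chi k) ->
  UMP n Phi (fun th => 0 <= th <= theta0) (fun th => theta0 < th <= 1) alpha phi.
Proof.
  intros Hphi Hsize Hcross; split; [exact Hphi | split].
  - intros theta Hth; destruct (Hcross _ Phi_const) as [k [Hk Hc]].
    rewrite <- (expect_const n theta alpha).
    apply (expect_le_of_crosses_down n theta theta0 _ _ k); auto.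
    rewrite expect_const; lra.
  - intros chi Hchi Hlevel theta Hth; destruct (Hcross chi Hchi) as [k [Hk Hc]].
    apply Rle_ge, (expect_le_of_crosses_up n theta theta0 _ _ k); auto; [lra|].
    rewrite Hsize; apply Hlevel; lra.
Qed.

Lemma UMP_of_crosses_left psi : Phi psi -> expect n theta0 psi = alpha ->
  (forall chi, Phi chi -> exists k, (k <= n)%nat /\ crosses n chi psi k) ->
  UMP n Phi (fun th => theta0 <= th <= 1) (fun th => 0 <= th < theta0) alpha psi.
Proof.
  intros Hpsi Hsize Hcross; split; [exact Hpsi | split].
  - intros theta Hth; destruct (Hcross _ Phi_const) as [k [Hk Hc]].
    rewrite <- (expect_const n theta alpha).
    apply (expect_le_of_crosses_up n theta theta0 _ _ k); auto.
    rewrite expect_const; lra.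
  - intros chi Hchi Hlevel theta Hth; destruct (Hcross chi Hchi) as [k [Hk Hc]].
    apply Rle_ge, (expect_le_of_crosses_down n theta theta0 _ _ k); auto; [lra|].
    rewrite Hsize; apply Hlevel; lra.
Qed.

End KarlinRubin.

Theorem corollary1 (eps delta alpha theta0 m1 m2 : R) (n : nat) :
  0 < eps -> 0 <= delta -> 0 < alpha < 1 -> (1 <= n)%nat -> 0 < theta0 < 1 ->
  let b := exp (- eps) in
  let q := 2 * delta * b / (1 - b + 2 * delta * b) in
  let phi := fun x : nat => tulap_cdf 0 b q (INR x - m1) in
  let psi := fun x : nat => 1 - tulap_cdf 0 b q (INR x - m2) in
  expect n theta0 phi = alpha ->
  expect n theta0 psi = alpha ->
  UMP n (DP_tests n eps delta)
      (fun th => 0 <= th <= theta0) (fun th => theta0 < th <= 1) alpha phi /\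
  UMP n (DP_tests n eps delta)
      (fun th => theta0 <= th <= 1) (fun th => 0 <= th < theta0) alpha psi.
Proof.
  intros Heps Hdelta Halpha _ Htheta0 b q phi psi Hphi Hpsi.
  assert (Hconst : DP_tests n eps delta (fun _ => alpha)) by (apply DP_tests_const; lra).
  split.
  - apply UMP_of_crosses_right; auto.
    + exact (tulap_test_DP eps delta Heps Hdelta n m1).
    + intros chi Hchi; exact (tulap_test_crosses eps delta Heps Hdelta n m1 chi Hchi).
  - apply UMP_of_crosses_left; auto.
    + exact (DP_tests_compl _ _ _ _ (tulap_test_DP eps delta Heps Hdelta n m2)).
    + intros chi Hchi.
      destruct (tulap_test_crosses eps delta Heps Hdelta n m2 _ (DP_tests_compl _ _ _ _ Hchi))
        as [k [Hk Hcross]].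
      exists k; split; [exact Hk | exact (crosses_compl _ _ _ _ Hcross)].
Qed.
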